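(* There is an absolute constant $C$ such that the following holds. Let $n\in\mathbb N$, $c>0$, and let $w\in\mathcal W$ satisfy $|w|\le c$ and be measurable with respect to the product $\sigma$-algebra $\mathcal A_n^*\times\mathcal A_n^*$, where $\mathcal A_n^*$ is the (finite) algebra of subsets of $[0,1]$ generated by the intervals $I_i=[\frac in,\frac{i+1}n]$, $0\le i\le n-1$ (so $w$ is constant on each $I_i\times I_j$ up to boundaries). Then $$\Big|\sup_{A\in\mathcal A}\Gamma(w,A)-\max_{A\in\mathcal A_n^*}\Gamma(w,A)\Big|\le \frac{Cc}{n}.$$
   Context: $\mathcal W$ is the space of bounded symmetric measurable functions $[0,1]^2\to\mathbb R$; $\mathcal A$ is the collection of Lebesgue measurable subsets of $[0,1]$. With $[x]_+=\max(x,0)$, for $w\in\mathcal W$ and $A\in\mathcal A$, $$\Gamma(w,A)=\iint_{y<z}\Big[\int_{A\cap[0,y]}(w(x,z)-w(x,y))\,dx\Big]_+dy\,dz+\iint_{y<z}\Big[\int_{A\cap[z,1]}(w(x,y)-w(x,z))\,dx\Big]_+dy\,dz,$$ and $\Gamma(w)=\sup_{A\in\mathcal A}\Gamma(w,A)$. *)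

From mathcomp Require Import all_boot all_order all_algebra.
From mathcomp Require Import all_classical all_reals all_analysis.
Set Implicit Arguments. Unset Strict Implicit. Unset Printing Implicit Defensive.
Import Order.TTheory GRing.Theory Num.Theory.
Import numFieldNormedType.Exports.
Local Open Scope classical_set_scope.
Local Open Scope ring_scope.

Section Defs.
Context {R : realType}.

Definition leb : set _ -> \bar R := @completed_lebesgue_measure R.

(* The class \mathcal A: Lebesgue measurable subsets of [0,1]. *)
Definition Lmeas (A : set R) : Prop :=
  ((wlength (R:=R) idfun)^*%mu).-cara.-measurable A /\ A `<=` `[0, 1]%classic.

Definition pos (x : R) : R := Num.max x 0.

Definition Gamma (w : R -> R -> R) (A : set R) : R :=
  \int[leb]_(z in `[0, 1]%classic)
     \int[leb]_(y in `[0, 1]%classic `&` [set y | y < z])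
        pos (\int[leb]_(x in A `&` `[0, y]%classic) (w x z - w x y))
  + \int[leb]_(z in `[0, 1]%classic)
     \int[leb]_(y in `[0, 1]%classic `&` [set y | y < z])
        pos (\int[leb]_(x in A `&` `[z, 1]%classic) (w x y - w x z)).

Definition Gamma_sup (w : R -> R -> R) : R := sup [set Gamma w A | A in Lmeas].

(* Atoms of the finite algebra A_n^* generated by I_i = [i/n,(i+1)/n],
   0 <= i <= n-1: for k = 2i (0 <= i <= n) the point {i/n}, and for
   k = 2i+1 (0 <= i <= n-1) the open interval ]i/n,(i+1)/n[. *)
Definition atom (n k : nat) : set R :=
  if odd k then `]((k./2)%:R / n%:R), ((k./2).+1%:R / n%:R)[%classic
  else [set (k./2)%:R / n%:R].

(* A_n^*: the finite unions of atoms (= the algebra generated by the I_i). *)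
Definition An_star (n : nat) (A : set R) : Prop :=
  exists S : set nat,
    A = \bigcup_(k in [set k | (k < (2 * n).+1)%N /\ S k]) atom n k.

(* w (restricted to [0,1]^2) is measurable w.r.t. A_n^* x A_n^*,
   i.e. constant on every product of two atoms. *)
Definition An_star_measurable (n : nat) (w : R -> R -> R) : Prop :=
  forall k l : nat, (k < (2 * n).+1)%N -> (l < (2 * n).+1)%N ->
    exists a : R, forall x y, atom n k x -> atom n l y -> w x y = a.

(* max_{A in A_n^*} Gamma(w,A) (a maximum over a finite family, written as sup) *)
Definition Gamma_max_n (n : nat) (w : R -> R -> R) : R :=
  sup [set Gamma w A | A in An_star n].

End Defs.

From mathcomp Require Import all_boot all_order all_algebra.
From mathcomp Require Import all_classical all_reals all_analysis.
From mathcomp Require Import ring lra.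
Set Implicit Arguments. Unset Strict Implicit. Unset Printing Implicit Defensive.
Import Order.TTheory GRing.Theory Num.Theory.
Local Open Scope classical_set_scope.
Local Open Scope ring_scope.

(* On every atom of A_n^* (the points i/n and the open intervals between them)
   w is constant, so for a measurable A the inner integrals of Gamma(w, A) at
   (y, z) are determined, up to the mass of A on the atoms of y and z, i.e. up
   to 2c/n, by the vector m of masses of A on the atoms.  This gives a function
   Gamma_disc of m with |Gamma(w, A) - Gamma_disc m| <= 4c/n.  Gamma_disc is a
   nonnegative combination of positive parts of linear forms, hence convex, so
   on the box of admissible mass vectors it is maximal at a vertex, which is the
   mass vector of a union of atoms, a set of A_n^*.  Hence every Gamma(w, A) is
   within 8c/n of some Gamma(w, B) with B in A_n^*. *)

Local Notation lmeasurable R := ((wlength (R:=R) idfun)^*%mu).-cara.-measurable.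

Section atoms.
Context {R : realType}.
Variable n : nat.
Hypothesis n_gt0 : (0 < n)%N.

Let N := (2 * n).+1.

Let n_gt0R : (0 : R) < n%:R. Proof. by rewrite ltr0n. Qed.

Lemma atomP (k : nat) (x : R) :
  atom n k x <-> (if odd k then k%:R - 1 < x * (2 * n%:R) < k%:R + 1
                  else x * (2 * n%:R) == k%:R).
Proof.
have n0 := n_gt0R.
have hk : (k%:R : R) = 2 * (k./2)%:R + (odd k)%:R.
  by rewrite -{1}(odd_double_half k) natrD -muln2 natrM mulrC addrC.
rewrite /atom; case: (odd k) hk => /= hk.
- rewrite /= in_itv /= ltr_pdivrMr // ltr_pdivlMr // hk.
  by split=> /andP[h1 h2]; apply/andP; split; rewrite ?natrS in h1 h2 *; lra.
- rewrite /= hk addr0; split=> [->|/eqP h]; first by apply/eqP; field; lra.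
  have -> : x = (x * (2 * n%:R)) / (2 * n%:R) by field; lra.
  by rewrite h; field; lra.
Qed.

Lemma atom_lt (k k' : nat) (x x' : R) :
  (k < k')%N -> atom n k x -> atom n k' x' -> x < x'.
Proof.
move=> kk' /atomP h /atomP h'; have n0 := n_gt0R.
suff : x * (2 * n%:R) < x' * (2 * n%:R) by rewrite ltr_pM2r ?mulr_gt0.
have k1 : (k%:R + 1 : R) <= k'%:R by rewrite natr1 ler_nat.
move: h h'; case ok: (odd k); case ok': (odd k').
- have k2 : (k.+2%:R : R) <= k'%:R.
    rewrite ler_nat ltn_neqAle kk' andbT.
    by apply/negP => /eqP e; move: ok'; rewrite -e /= ok.
  rewrite -!natr1 in k2.
  by move=> /andP[h1 h2] /andP[h3 h4]; lra.
- by move=> /andP[h1 h2] /eqP h3; lra.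
- by move=> /eqP h1 /andP[h3 h4]; lra.
- by move=> /eqP h1 /eqP h3; lra.
Qed.

Lemma atom_inj (k k' : nat) (x : R) : atom n k x -> atom n k' x -> k = k'.
Proof.
move=> h h'; case: (ltngtP k k') => // e.
- by have := atom_lt e h h'; rewrite ltxx.
- by have := atom_lt e h' h; rewrite ltxx.
Qed.

Lemma atom_sub01 (k : nat) : (k < N)%N -> @atom R n k `<=` `[0, 1].
Proof.
move=> kN x /atomP h; rewrite /= in_itv /=; have n0 := n_gt0R.
have k2 : (k%:R : R) <= 2 * n%:R by rewrite -natrM ler_nat -ltnS.
suff : 0 <= x * (2 * n%:R) <= 1 * (2 * n%:R).
  by move=> /andP[a b]; apply/andP; split; nra.
move: h; case ok: (odd k).
- have k3 : (k%:R + 1 : R) <= 2 * n%:R.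
    rewrite natr1 -natrM ler_nat ltn_neqAle -ltnS kN andbT.
    by apply/negP => /eqP e; move: ok; rewrite e oddM.
  have k1 : (1 : R) <= k%:R by rewrite ler1n; case: k ok {kN k2 k3}.
  by move=> /andP[h1 h2]; apply/andP; split; lra.
- by move=> /eqP ->; rewrite ler0n /=; lra.
Qed.

Definition atom_center (k : nat) : R := k%:R / (2 * n%:R).

Lemma atom_center_in (k : nat) : atom n k (atom_center k).
Proof.
have n0 := n_gt0R; apply/atomP; have -> : atom_center k * (2 * n%:R) = k%:R.
  by rewrite /atom_center; field; lra.
by case: (odd k) => //; apply/andP; split; lra.
Qed.

Lemma atom_cover (x : R) : 0 <= x <= 1 -> exists2 k, (k < N)%N & atom n k x.
Proof.
move=> /andP[x0 x1]; have n0 := n_gt0R; set t := x * (2 * n%:R).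
have t0 : 0 <= t by rewrite /t mulr_ge0 // mulr_ge0 // ler0n.
have t2 : t <= 2 * n%:R by rewrite /t; nra.
set j := Num.truncn t.
have jl : (j%:R : R) <= t by rewrite truncn_le.
have ju : t < j%:R + 1 by rewrite natr1 truncnS_gt.
have j2 : (j <= 2 * n)%N by rewrite /j truncn_le_nat -natr1 (natrM R 2 n); lra.
case oj: (odd j).
  by exists j; rewrite ?ltnS //; apply/atomP; rewrite oj -/t; apply/andP; split; lra.
have [tj|tj] := eqVneq t j%:R.
  by exists j; rewrite ?ltnS //; apply/atomP; rewrite oj -/t tj.
have tj' : j%:R < t by rewrite lt_neqAle jl eq_sym tj.
exists j.+1.
  rewrite ltnS ltn_neqAle j2 andbT; apply/negP => /eqP e.
  by move: tj'; rewrite e natrM; lra.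
by apply/atomP; rewrite /= oj /= -/t -natr1; apply/andP; split; lra.
Qed.

Definition atom_len (k : nat) : R := if odd k then n%:R^-1 else 0.

Lemma atom_len_ge0 k : 0 <= atom_len k.
Proof. by rewrite /atom_len; case: ifP => // _; rewrite invr_ge0 ler0n. Qed.

Lemma atom_len_le k : atom_len k <= n%:R^-1.
Proof. by rewrite /atom_len; case: ifP => // _; rewrite invr_ge0 ler0n. Qed.

Lemma sum_atom_len : \sum_(0 <= k < N) atom_len k = 1.
Proof.
suff -> : forall m, \sum_(0 <= k < (2 * m).+1) atom_len k = m%:R / n%:R.
  by rewrite divff // gt_eqF.
elim=> [|m IH]; first by rewrite big_nat1 /atom_len /= mul0r.
rewrite (_ : (2 * m.+1).+1 = (2 * m).+3); last by rewrite mulnS.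
rewrite big_nat_recr // big_nat_recr // IH /atom_len /= oddM /=.
by rewrite addr0 -natr1 mulrDl mul1r.
Qed.

Lemma lmeasurable_atom (k : nat) : lmeasurable R (atom n k).
Proof.
apply: sub_caratheodory; rewrite /atom; case: (odd k).
- exact: measurable_itv.
- exact: measurable_set1.
Qed.

Lemma leb_atom (k : nat) : leb (atom n k) = (atom_len k)%:E.
Proof.
have n0 := n_gt0R.
rewrite /leb /completed_lebesgue_measure.
rewrite -[completed_lebesgue_stieltjes_measure idfun _]/(lebesgue_measure (atom n k)).
rewrite /atom /atom_len; case: (odd k).
- rewrite lebesgue_measure_itv /= lte_fin ltr_pM2r ?invr_gt0 // ltr_nat ltnSn.
  by rewrite -EFinB; congr EFin; rewrite -mulrBl -natrB // subSnn mul1r.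
- exact: lebesgue_measure_set1.
Qed.

End atoms.

(* The nonnegative integral is a supremum over simple functions below the
   integrand, so its monotonicity needs no measurability. *)
Lemma ge0_le_integral_nomeas d (T : measurableType d) (R : realType)
    (mu : {measure set T -> \bar R}) (D : set T) (f g : T -> \bar R) :
  (forall x, D x -> (0 <= f x)%E) -> (forall x, D x -> (f x <= g x)%E) ->
  (\int[mu]_(x in D) f x <= \int[mu]_(x in D) g x)%E.
Proof.
move=> f0 fg; have g0 x : D x -> (0 <= g x)%E.
  by move=> Dx; exact: le_trans (f0 x Dx) (fg x Dx).
rewrite (ge0_integralE _ f0) (ge0_integralE _ g0).
apply: ereal_sup_le => _ [h hf <-]; exists h => //= x.
by apply: le_trans (hf x) _; rewrite /patch; case: ifP => // /set_mem /fg.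
Qed.

Section atom_integration.
Context {R : realType}.
Variable n : nat.
Hypothesis n_gt0 : (0 < n)%N.

Let N := (2 * n).+1.

Definition atom_mass (D : set R) (k : nat) : R := fine (leb (atom n k `&` D)).

Lemma atom_massE (D : set R) k : lmeasurable R D ->
  leb (atom n k `&` D) = (atom_mass D k)%:E.
Proof.
move=> mD; rewrite /atom_mass fineK // ge0_fin_numE ?measure_ge0 //.
rewrite (le_lt_trans _ (ltry (atom_len n k))) // -leb_atom //.
by apply: measureIl => //; exact: lmeasurable_atom.
Qed.

Lemma atom_mass_itv (D : set R) k : lmeasurable R D ->
  0 <= atom_mass D k <= atom_len n k.
Proof.
move=> mD; rewrite -!lee_fin -atom_massE // measure_ge0 -leb_atom //=.
by apply: measureIl => //; exact: lmeasurable_atom.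
Qed.

Lemma atom_mass_full (D : set R) k : atom n k `<=` D -> atom_mass D k = atom_len n k.
Proof. by move=> /setIidPl sub; rewrite /atom_mass sub leb_atom. Qed.

Lemma atom_mass_eq0 (D : set R) k : atom n k `&` D = set0 -> atom_mass D k = 0.
Proof. by rewrite /atom_mass /leb => ->; rewrite measure0. Qed.

Lemma integral_atom_step (D : set R) (f : R -> R) (v : nat -> R) :
  lmeasurable R D -> D `<=` `[0, 1] ->
  (forall k x, (k < N)%N -> atom n k x -> D x -> f x = v k) ->
  (\int[leb]_(x in D) (f x)%:E = (\sum_(0 <= k < N) v k * atom_mass D k)%:E)%E.
Proof.
move=> mD D01 fv.
have cover x : D x -> exists2 k, (k < N)%N & atom n k x.
  by move=> /D01; rewrite /= in_itv /=; exact: atom_cover.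
have DE : D = \big[setU/set0]_(k <- index_iota 0 N) (atom n k `&` D).
  rewrite big_mkord -(bigcup_mkord N (fun k => atom n k `&` D)).
  apply/seteqP; split; last by move=> x [k _ []].
  by move=> x Dx; have [k kN ak] := cover x Dx; exists k.
have mF k : lmeasurable R (atom n k `&` D).
  by apply: measurableI => //; exact: lmeasurable_atom.
rewrite [in LHS]DE integral_bigsetU_EFin ?iota_uniq //; last 2 first.
- by move=> i j _ _ [x [[ai _] [aj _]]]; exact: atom_inj ai aj.
- rewrite -DE => _ B mB.
  rewrite (_ : _ `&` _ = \bigcup_(k in [set k | (k < N)%N /\ B (v k)%:E])
                          (atom n k `&` D)).
    by apply: bigcup_measurable => k _; exact: mF.
  apply/seteqP; split => [x [Dx Bx]|x [k [kN Bk] [ak Dx]]].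
  + by have [k kN ak] := cover x Dx; exists k => //; split => //; rewrite -(fv k x).
  + by split => //=; rewrite (fv k x).
rewrite -sumEFin; apply: eq_big_nat => k /andP[_ kN].
transitivity (\int[leb]_(x in atom n k `&` D) (cst (v k)%:E) x)%E.
  by apply: eq_integral => x; rewrite inE => -[ak Dx]; rewrite /= (fv k x).
by rewrite integral_cst // EFinM -(atom_massE k mD).
Qed.

Definition atom_index (x : R) : nat := xget 0%N [set k | (k < N)%N /\ atom n k x].

Lemma atom_indexE k x : (k < N)%N -> atom n k x -> atom_index x = k.
Proof.
move=> kN ak; rewrite /atom_index; case: xgetP => [j _ [_ aj] | H].
- exact: atom_inj aj ak.
- by case: (H k).
Qed.

Lemma Rintegral_atom_sandwich (D : set R) (f : R -> R) (lo hi : nat -> R) :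
  lmeasurable R D -> D `<=` `[0, 1] -> (forall k, 0 <= lo k) ->
  (forall k x, (k < N)%N -> atom n k x -> D x -> lo k <= f x <= hi k) ->
  \sum_(0 <= k < N) lo k * atom_mass D k <= \int[leb]_(x in D) f x <=
  \sum_(0 <= k < N) hi k * atom_mass D k.
Proof.
move=> mD D01 lo0 fb.
have index x : D x -> (atom_index x < N)%N /\ atom n (atom_index x) x.
  move=> Dx; have := D01 x Dx; rewrite /= in_itv /= => /(atom_cover n_gt0)[k kN ak].
  by rewrite (atom_indexE kN ak).
have bnd x : D x -> lo (atom_index x) <= f x <= hi (atom_index x).
  by move=> Dx; have [kN ak] := index x Dx; exact: fb.
have eL := @integral_atom_step D (fun x => lo (atom_index x)) lo mD D01
  (fun k x kN ak _ => congr1 lo (atom_indexE kN ak)).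
have eU := @integral_atom_step D (fun x => hi (atom_index x)) hi mD D01
  (fun k x kN ak _ => congr1 hi (atom_indexE kN ak)).
have leL : (\int[leb]_(x in D) (lo (atom_index x))%:E <= \int[leb]_(x in D) (f x)%:E)%E.
  apply: ge0_le_integral_nomeas => x Dx; rewrite lee_fin ?lo0 //.
  by case/andP: (bnd x Dx).
have leU : (\int[leb]_(x in D) (f x)%:E <= \int[leb]_(x in D) (hi (atom_index x))%:E)%E.
  apply: ge0_le_integral_nomeas => x Dx; have /andP[l u] := bnd x Dx.
    by rewrite lee_fin (le_trans (lo0 _) l).
  by rewrite lee_fin.
move: leL leU; rewrite eL eU /Rintegral.
by case: (\int[leb]_(x in D) (f x)%:E)%E => [r| |] //=; rewrite !lee_fin => -> ->.
Qed.

End atom_integration.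

Section atom_approximation.
Context {R : realType}.
Variable n : nat.
Hypothesis n_gt0 : (0 < n)%N.

Let N := (2 * n).+1.

Lemma sum_atom_len_le (P : pred nat) : \sum_(0 <= k < N | P k) atom_len n k <= 1 :> R.
Proof.
rewrite -(@sum_atom_len R n n_gt0) [leRHS](bigID P) /= lerDl.
by apply: sumr_ge0 => k _; exact: atom_len_ge0.
Qed.

Lemma Rintegral_atom_approx (D : set R) (f : R -> R) (P : pred nat) (a : nat -> R) (e : R) :
  lmeasurable R D -> D `<=` `[0, 1] -> 0 <= e -> (forall x, D x -> 0 <= f x) ->
  (forall k, (k < N)%N -> P k -> atom n k `<=` D) ->
  (forall k x, (k < N)%N -> atom n k x -> D x ->
     if P k then `|f x - a k| <= e else f x == 0) ->
  `|\int[leb]_(x in D) f x - \sum_(0 <= k < N | P k) atom_len n k * a k| <= e.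
Proof.
move=> mD D01 e0 f0 sub fa.
set lo := fun k => if P k then Num.max (a k - e) 0 else 0.
set hi := fun k => if P k then a k + e else 0.
have lo0 k : 0 <= lo k by rewrite /lo; case: ifP; rewrite // le_max lexx orbT.
have bnd k x : (k < N)%N -> atom n k x -> D x -> lo k <= f x <= hi k.
  move=> kN ak Dx; have := fa k x kN ak Dx; rewrite /lo /hi.
  case: (P k) => [|/eqP ->]; last by rewrite lexx.
  by rewrite ler_norml ge_max f0 // andbT => /andP[h1 h2]; apply/andP; split; lra.
have /andP[intL intU] := Rintegral_atom_sandwich n_gt0 mD D01 lo0 bnd.
have massP k : (k < N)%N -> P k -> atom_mass n D k = atom_len n k.
  by move=> kN Pk; exact: atom_mass_full (sub k kN Pk).
set S := \sum_(0 <= k < N | P k) atom_len n k * a k.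
pose L := \sum_(0 <= k < N | P k) (atom_len n k : R).
have L0 : 0 <= L by apply: sumr_ge0 => k _; exact: atom_len_ge0.
have L1 : L <= 1 := sum_atom_len_le P.
have sumL : S - e * L <= \sum_(0 <= k < N) lo k * atom_mass n D k.
  rewrite /S /L mulr_sumr -sumrB big_mkcond /=; apply: ler_sum_nat => k /andP[_ kN].
  rewrite /lo; case: ifP => Pk; last by rewrite mul0r.
  rewrite massP // [e * _]mulrC -mulrBr [leRHS]mulrC.
  by rewrite ler_wpM2l ?atom_len_ge0 // le_max lexx.
have sumU : \sum_(0 <= k < N) hi k * atom_mass n D k = S + e * L.
  rewrite /S /L mulr_sumr -big_split [RHS]big_mkcond /=; apply: eq_big_nat => k /andP[_ kN].
  by rewrite /hi; case: ifP => Pk; [rewrite massP //; ring | rewrite mul0r].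
rewrite ler_norml; apply/andP; split; nra.
Qed.

Lemma Rintegral_atom_le (D : set R) (f : R -> R) (B : R) :
  lmeasurable R D -> D `<=` `[0, 1] -> 0 <= B ->
  (forall x, D x -> 0 <= f x <= B) -> \int[leb]_(x in D) f x <= B.
Proof.
move=> mD D01 B0 fB.
have /andP[_ intU] := Rintegral_atom_sandwich n_gt0 (lo := fun=> 0) (hi := fun=> B)
  mD D01 (fun=> lexx 0) (fun k x _ _ Dx => fB x Dx).
apply: le_trans intU _; rewrite -mulr_sumr -[leRHS]mulr1 ler_wpM2l //.
rewrite -(@sum_atom_len R n n_gt0); apply: ler_sum => k _.
by case/andP: (atom_mass_itv n_gt0 k mD).
Qed.

End atom_approximation.

Section tri_integral.
Context {R : realType}.

Definition tri_integral (g : R -> R -> R) : R :=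
  \int[leb]_(z in `[0, 1]%classic)
     \int[leb]_(y in `[0, 1]%classic `&` [set y | y < z]) g y z.

Definition tri_row (n : nat) (s : nat -> nat -> R) (l : nat) : R :=
  \sum_(0 <= k < (2 * n).+1 | (k < l)%N) atom_len n k * s k l.

Definition tri_sum (n : nat) (s : nat -> nat -> R) : R :=
  \sum_(0 <= l < (2 * n).+1) atom_len n l * tri_row n s l.

Variables (n : nat) (g : R -> R -> R).
Hypothesis n_gt0 : (0 < n)%N.
Hypothesis g_ge0 : forall y z, 0 <= y -> y < z -> z <= 1 -> 0 <= g y z.

Let N := (2 * n).+1.

Let slice (z : R) : set R := `[0, 1]%classic `&` [set y | y < z].

Let lmeasurable_slice z : lmeasurable R (slice z).
Proof.
apply: measurableI; apply: sub_caratheodory; first exact: measurable_itv.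
rewrite (_ : [set y | y < z] = `]-oo, z[%classic); first exact: measurable_itv.
by apply/seteqP; split => y; rewrite /= in_itv.
Qed.

Let slice_sub01 z : slice z `<=` `[0, 1]. Proof. by move=> y []. Qed.

Let slice_ge0 z : z <= 1 -> 0 <= \int[leb]_(y in slice z) g y z.
Proof.
move=> z1; apply: Rintegral_ge0 => y [] /=; rewrite in_itv /= => /andP[y0 _] yz.
exact: g_ge0.
Qed.

Lemma tri_integral_le B : 0 <= B ->
  (forall y z, 0 <= y -> y < z -> z <= 1 -> g y z <= B) -> tri_integral g <= B.
Proof.
move=> B0 gB; apply: (Rintegral_atom_le n_gt0) => //.
- exact: sub_caratheodory (measurable_itv _).
- move=> z; rewrite /= in_itv /= => /andP[z0 z1]; rewrite slice_ge0 //=.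
  apply: (Rintegral_atom_le n_gt0 (lmeasurable_slice z) (@slice_sub01 z) B0) => y [] /=.
  rewrite in_itv /= => /andP[y0 _] yz; rewrite g_ge0 //=; exact: gB.
Qed.

Lemma tri_integral_approx (s : nat -> nat -> R) e : 0 <= e ->
  (forall k l y z, (k < N)%N -> (l < N)%N -> (k < l)%N ->
     atom n k y -> atom n l z -> `|g y z - s k l| <= e) ->
  (forall l y z, (l < N)%N -> atom n l y -> atom n l z -> g y z = 0) ->
  `|tri_integral g - tri_sum n s| <= e.
Proof.
move=> e0 gs g0.
have inner l z : (l < N)%N -> atom n l z ->
    `|\int[leb]_(y in slice z) g y z - tri_row n s l| <= e.
  move=> lN az; have := atom_sub01 n_gt0 lN az; rewrite /= in_itv /= => /andP[_ z1].
  apply: (Rintegral_atom_approx n_gt0 (lmeasurable_slice z) (@slice_sub01 z) e0).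
  - by move=> y [] /=; rewrite in_itv /= => /andP[y0 _] yz; exact: g_ge0.
  - move=> k kN kl y ak; split; first exact: (atom_sub01 n_gt0 kN ak).
    exact: (atom_lt n_gt0 kl ak az).
  - move=> k y kN ak [_ yz]; case: ltngtP => kl.
    + exact: gs.
    + by have := atom_lt n_gt0 kl az ak; rewrite ltNge (ltW yz).
    + by move: ak; rewrite kl => ak; rewrite (g0 l y z).
apply: (Rintegral_atom_approx n_gt0) => //.
- exact: sub_caratheodory (measurable_itv _).
- by move=> z; rewrite /= in_itv /= => /andP[_ z1]; exact: slice_ge0.
- by move=> k kN _; exact: (atom_sub01 n_gt0 kN).
- by move=> l z lN az _; exact: inner.
Qed.

End tri_integral.

Section positive_part.
Context {R : realType}.

Lemma pos_ge0 (x : R) : 0 <= pos x.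
Proof. by rewrite /pos le_max lexx orbT. Qed.

Lemma pos_le_norm (x : R) : pos x <= `|x|.
Proof. by rewrite /pos ge_max normr_ge0 andbT ler_norm. Qed.

Lemma pos_lipschitz (x y : R) : `|pos x - pos y| <= `|x - y|.
Proof.
have h1 := ler_norm (x - y); have h2 := ler_norm (y - x); rewrite distrC in h2.
rewrite /pos ler_norml; case: (leP x 0) => hx; case: (leP y 0) => hy.
all: by apply/andP; split; lra.
Qed.

Lemma pos_convex (t x y : R) : 0 <= t <= 1 ->
  pos ((1 - t) * x + t * y) <= (1 - t) * pos x + t * pos y.
Proof.
move=> /andP[t0 t1]; have px := pos_ge0 x; have py := pos_ge0 y.
have xpx : x <= pos x by rewrite /pos le_max lexx.
have ypy : y <= pos y by rewrite /pos le_max lexx.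
by rewrite [leLHS]/pos ge_max; apply/andP; split; nra.
Qed.

End positive_part.

Section tri_sum.
Context {R : realType}.
Variable n : nat.

Lemma tri_sum_le (s s' : nat -> nat -> R) :
  (forall k l, s k l <= s' k l) -> tri_sum n s <= tri_sum n s'.
Proof.
move=> ss'; apply: ler_sum => l _; apply: ler_wpM2l; first exact: atom_len_ge0.
by apply: ler_sum => k _; apply: ler_wpM2l; [exact: atom_len_ge0 | exact: ss'].
Qed.

Lemma tri_row_lin (a b : R) (s s' : nat -> nat -> R) l :
  tri_row n (fun k l => a * s k l + b * s' k l) l = a * tri_row n s l + b * tri_row n s' l.
Proof. by rewrite /tri_row !mulr_sumr -big_split; apply: eq_bigr => k _ /=; ring. Qed.

Lemma tri_sum_lin (a b : R) (s s' : nat -> nat -> R) :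
  tri_sum n (fun k l => a * s k l + b * s' k l) = a * tri_sum n s + b * tri_sum n s'.
Proof.
rewrite /tri_sum !mulr_sumr -big_split; apply: eq_bigr => l _ /=.
by rewrite tri_row_lin; ring.
Qed.

End tri_sum.

Section discrete_Gamma.
Context {R : realType}.
Variables (n : nat) (w : R -> R -> R).

Let N := (2 * n).+1.

Definition w_atom (k l : nat) : R := w (atom_center n k) (atom_center n l).

(* With [m i] the mass of [A] on atom [i], [Gamma_left m k l] approximates the
   first integrand of [Gamma w A] at [y] in atom [k] and [z] in atom [l]. *)
Definition Gamma_left (m : nat -> R) (k l : nat) : R :=
  pos (\sum_(0 <= i < N | (i < k)%N) (w_atom i l - w_atom i k) * m i).

Definition Gamma_right (m : nat -> R) (k l : nat) : R :=
  pos (\sum_(0 <= i < N | (l < i)%N) (w_atom i k - w_atom i l) * m i).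

Definition Gamma_disc (m : nat -> R) : R :=
  tri_sum n (Gamma_left m) + tri_sum n (Gamma_right m).

Lemma eq_Gamma_disc (u v : nat -> R) :
  (forall i, (i < N)%N -> u i = v i) -> Gamma_disc u = Gamma_disc v.
Proof.
move=> uv; have eq_sum (P : pred nat) (b : nat -> R) :
    \sum_(0 <= i < N | P i) b i * u i = \sum_(0 <= i < N | P i) b i * v i.
  rewrite [LHS]big_mkcond [RHS]big_mkcond.
  by apply: eq_big_nat => i /andP[_ iN]; rewrite uv.
rewrite /Gamma_disc /Gamma_left /Gamma_right.
by congr (tri_sum _ _ + tri_sum _ _); apply/funext => k; apply/funext => l;
  rewrite eq_sum.
Qed.

Lemma Gamma_disc_convex (t : R) (u v : nat -> R) : 0 <= t <= 1 ->
  Gamma_disc (fun i => (1 - t) * u i + t * v i) <=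
  (1 - t) * Gamma_disc u + t * Gamma_disc v.
Proof.
move=> t01.
have sum_lin (P : pred nat) (b : nat -> R) :
    \sum_(0 <= i < N | P i) b i * ((1 - t) * u i + t * v i) =
    (1 - t) * \sum_(0 <= i < N | P i) b i * u i + t * \sum_(0 <= i < N | P i) b i * v i.
  by rewrite !mulr_sumr -big_split; apply: eq_bigr => i _ /=; ring.
have hL k l : Gamma_left (fun i => (1 - t) * u i + t * v i) k l <=
    (1 - t) * Gamma_left u k l + t * Gamma_left v k l.
  by rewrite /Gamma_left sum_lin; exact: pos_convex.
have hR k l : Gamma_right (fun i => (1 - t) * u i + t * v i) k l <=
    (1 - t) * Gamma_right u k l + t * Gamma_right v k l.
  by rewrite /Gamma_right sum_lin; exact: pos_convex.
rewrite /Gamma_disc; apply: le_trans (lerD (tri_sum_le n hL) (tri_sum_le n hR)) _.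
by rewrite !tri_sum_lin !mulrDr addrACA.
Qed.

(* A convex function on the segment [0, atom_len j] is maximal at an endpoint. *)
Lemma Gamma_disc_coord (m : nat -> R) j : 0 <= m j <= atom_len n j ->
  exists b : bool, Gamma_disc m <=
    Gamma_disc (fun i => if i == j then (if b then atom_len n j else 0) else m i).
Proof.
move=> /andP[mj0 mj1].
set m0 := fun i => if i == j then 0 else m i.
set m1 := fun i => if i == j then atom_len n j else m i.
have [len0|len_neq0] := eqVneq (atom_len n j : R) 0.
  exists false; rewrite (_ : (fun i => _) = m) //.
  by apply/funext => i; case: eqVneq => [->|] //=; apply/eqP; rewrite eq_le mj0 -len0 mj1.
have len_gt0 : (0 : R) < atom_len n j by rewrite lt_neqAle eq_sym len_neq0 atom_len_ge0.
set t := m j / atom_len n j.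
have t01 : 0 <= t <= 1 by rewrite divr_ge0 ?atom_len_ge0 //= ler_pdivrMr // mul1r.
have mE : m = fun i => (1 - t) * m0 i + t * m1 i.
  apply/funext => i; rewrite /m0 /m1; case: eqVneq => [->|_]; last by ring.
  by rewrite mulr0 add0r /t mulfVK.
have := Gamma_disc_convex m0 m1 t01; rewrite -mE; have /andP[t0 t1] := t01.
case: (leP (Gamma_disc m0) (Gamma_disc m1)) => hm hconv.
- by exists true; nra.
- by exists false; nra.
Qed.

Lemma Gamma_disc_vertex (m : nat -> R) : (forall i, 0 <= m i <= atom_len n i) ->
  exists S : nat -> bool,
    Gamma_disc m <= Gamma_disc (fun i => if S i then atom_len n i else 0).
Proof.
move=> box; pose vertex (S : nat -> bool) i := if S i then atom_len n i else 0 : R.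
suff [S hS] : exists S, Gamma_disc m <=
    Gamma_disc (fun i => if (i < N)%N then vertex S i else m i).
  exists S; apply: le_trans hS _.
  by rewrite (eq_Gamma_disc (v := vertex S)) => [|i iN]; [exact: lexx | rewrite iN].
elim: N => [|j [S hS]].
  by exists xpred0; rewrite (_ : (fun i => _) = m).
have [b hb] := Gamma_disc_coord (j := j)
  (m := fun i => if (i < j)%N then vertex S i else m i) ltac:(by rewrite /= ltnn; exact: box).
exists (fun i => if i == j then b else S i); apply: le_trans hS (le_trans hb _).
rewrite le_eqVlt; apply/predU1P; left; congr Gamma_disc; apply/funext => i.
rewrite /vertex; case: eqVneq => [->|ij]; first by rewrite ltnSn.
by rewrite ltnS (leq_eqVlt i j) (negbTE ij).
Qed.

End discrete_Gamma.

Lemma sum_split_index {R : realType} (r j : nat) (b m m' : nat -> R) (P : pred nat) :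
  (j < r)%N -> ~~ P j ->
  (forall i, (i < r)%N -> i != j -> m i = if P i then m' i else 0) ->
  \sum_(0 <= i < r) b i * m i = b j * m j + \sum_(0 <= i < r | P i) b i * m' i.
Proof.
move=> jr Pj mE; rewrite [in RHS]big_mkcond /= !(bigD1_seq j) ?mem_index_iota ?iota_uniq //=.
rewrite (negbTE Pj) add0r; congr (_ + _); rewrite [LHS]big_mkcond [RHS]big_mkcond /=.
apply: eq_big_nat => i /andP[_ ir]; case: eqVneq => //= ij.
by rewrite mE //; case: (P i); rewrite ?mulr0.
Qed.

Lemma GammaE {R : realType} (w : R -> R -> R) (A : set R) : Gamma w A =
  tri_integral (fun y z => pos (\int[leb]_(x in A `&` `[0, y]%classic) (w x z - w x y))) +
  tri_integral (fun y z => pos (\int[leb]_(x in A `&` `[z, 1]%classic) (w x y - w x z))).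
Proof. by []. Qed.

Section Gamma_approximation.
Context {R : realType}.
Variables (n : nat) (w : R -> R -> R) (c : R).
Hypothesis n_gt0 : (0 < n)%N.
Hypothesis w_le : forall x y, x \in `[0, 1] -> y \in `[0, 1] -> `|w x y| <= c.
Hypothesis w_step : An_star_measurable n w.

Let N := (2 * n).+1.

Let c_ge0 : 0 <= c.
Proof. by apply: le_trans (normr_ge0 (w 0 0)) (w_le _ _); rewrite in_itv /= lexx ler01. Qed.

Let err_ge0 : 0 <= 2 * c / n%:R.
Proof. by rewrite divr_ge0 ?ler0n // mulr_ge0. Qed.

Lemma w_atomE k l x y : (k < N)%N -> (l < N)%N ->
  atom n k x -> atom n l y -> w x y = w_atom n w k l.
Proof.
move=> kN lN ax ay; have [a wa] := w_step kN lN.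
by rewrite /w_atom (wa _ _ ax ay) (wa _ _ (atom_center_in n_gt0 k) (atom_center_in n_gt0 l)).
Qed.

Lemma w_atom_diff_le i k l : (i < N)%N -> (k < N)%N -> (l < N)%N ->
  `|w_atom n w i l - w_atom n w i k| <= 2 * c.
Proof.
move=> iN kN lN; have center j : (j < N)%N -> atom_center n j \in `[0, 1].
  by move=> jN; exact: (atom_sub01 n_gt0 jN (atom_center_in n_gt0 j)).
apply: le_trans (ler_normB _ _) _; rewrite mulr2n mulrDl mul1r.
by apply: lerD; apply: w_le; exact: center.
Qed.

Lemma w_atom_diff_mass_le i k l (m : R) : (i < N)%N -> (k < N)%N -> (l < N)%N ->
  0 <= m <= atom_len n i -> `|(w_atom n w i l - w_atom n w i k) * m| <= 2 * c / n%:R.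
Proof.
move=> iN kN lN /andP[m0 m1]; rewrite normrM (ger0_norm m0).
apply: ler_pM => //; first exact: w_atom_diff_le.
exact: le_trans m1 (atom_len_le n i).
Qed.

Lemma Rintegral_w_diff (D : set R) p q k l : lmeasurable R D -> D `<=` `[0, 1] ->
  (k < N)%N -> (l < N)%N -> atom n l p -> atom n k q ->
  \int[leb]_(x in D) (w x p - w x q) =
  \sum_(0 <= i < N) (w_atom n w i l - w_atom n w i k) * atom_mass n D i.
Proof.
move=> mD D01 kN lN ap aq; rewrite /Rintegral.
rewrite (integral_atom_step n_gt0 (v := fun i => w_atom n w i l - w_atom n w i k) mD D01) //.
by move=> i x iN ai _; rewrite (w_atomE iN lN ai ap) (w_atomE iN kN ai aq).
Qed.

Lemma Rintegral_w_diff_le (D : set R) p q : lmeasurable R D -> D `<=` `[0, 1] ->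
  0 <= p <= 1 -> 0 <= q <= 1 -> `|\int[leb]_(x in D) (w x p - w x q)| <= 2 * c.
Proof.
move=> mD D01 /(atom_cover n_gt0)[l lN ap] /(atom_cover n_gt0)[k kN aq].
rewrite (Rintegral_w_diff mD D01 kN lN ap aq); apply: le_trans (ler_norm_sum _ _ _) _.
apply: (@le_trans _ _ (\sum_(0 <= i < N) 2 * c * atom_len n i)).
  apply: ler_sum_nat => i /andP[_ iN]; have /andP[m0 m1] := atom_mass_itv n_gt0 i mD.
  by rewrite normrM (ger0_norm m0); apply: ler_pM => //; exact: w_atom_diff_le.
by rewrite -mulr_sumr sum_atom_len // mulr1.
Qed.

Lemma atom_mass_prefix (A : set R) i k y : (i < N)%N -> (k < N)%N -> atom n k y ->
  i != k -> atom_mass n (A `&` `[0, y]) i = if (i < k)%N then atom_mass n A i else 0.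
Proof.
move=> iN kN ay ik; case: ltngtP => [ik'|ki|/eqP]; last by rewrite (negbTE ik).
- congr (fine (leb _)); apply/seteqP; split => [x [ax [Ax _]] //|x [ax Ax]].
  split=> //; split=> //; have := atom_sub01 n_gt0 iN ax; rewrite /= !in_itv /=.
  by move=> /andP[-> _]; rewrite ltW // (atom_lt n_gt0 ik' ax ay).
- apply: atom_mass_eq0; apply/seteqP; split => // x [ax [_]].
  by rewrite /= in_itv /= => /andP[_]; rewrite leNgt (atom_lt n_gt0 ki ay ax).
Qed.

Lemma atom_mass_suffix (A : set R) i l z : (i < N)%N -> (l < N)%N -> atom n l z ->
  i != l -> atom_mass n (A `&` `[z, 1]) i = if (l < i)%N then atom_mass n A i else 0.
Proof.
move=> iN lN az il; case: ltngtP => [li|il'|/eqP]; last by rewrite eq_sym (negbTE il).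
- congr (fine (leb _)); apply/seteqP; split => [x [ax [Ax _]] //|x [ax Ax]].
  split=> //; split=> //; have := atom_sub01 n_gt0 iN ax; rewrite /= !in_itv /=.
  by move=> /andP[_ ->]; rewrite andbT ltW // (atom_lt n_gt0 li az ax).
- apply: atom_mass_eq0; apply/seteqP; split => // x [ax [_]].
  by rewrite /= in_itv /= => /andP[]; rewrite leNgt (atom_lt n_gt0 il' ax az).
Qed.

Let lmeasurable_cut (A : set R) a b : lmeasurable R A -> lmeasurable R (A `&` `[a, b]).
Proof. by move=> mA; apply: measurableI => //; exact: sub_caratheodory (measurable_itv _). Qed.

Let pos_Rintegral_w_diff_le (A : set R) a b p q : Lmeas A ->
  0 <= p <= 1 -> 0 <= q <= 1 -> pos (\int[leb]_(x in A `&` `[a, b]) (w x p - w x q)) <= 2 * c.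
Proof.
move=> [mA A01] p01 q01; apply: le_trans (pos_le_norm _) _.
by apply: Rintegral_w_diff_le => // [|x [/A01]//]; exact: lmeasurable_cut.
Qed.

Lemma Gamma_le (A : set R) : Lmeas A -> Gamma w A <= 4 * c.
Proof.
move=> LA; rewrite GammaE (_ : 4 * c = 2 * c + 2 * c); last by ring.
have c2 : 0 <= 2 * c by rewrite mulr_ge0.
by apply: lerD; apply: (tri_integral_le n_gt0 (fun y z _ _ _ => pos_ge0 _) c2)
  => y z y0 yz z1; apply: pos_Rintegral_w_diff_le => //; apply/andP; split; lra.
Qed.

Lemma Gamma_left_approx (A : set R) : Lmeas A ->
  `|tri_integral (fun y z => pos (\int[leb]_(x in A `&` `[0, y]%classic) (w x z - w x y)))
    - tri_sum n (Gamma_left n w (atom_mass n A))| <= 2 * c / n%:R.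
Proof.
move=> [mA A01]; have cut01 y : A `&` `[0, y] `<=` `[0, 1] by move=> x [/A01].
apply: (tri_integral_approx n_gt0 (fun y z _ _ _ => pos_ge0 _) err_ge0).
- move=> k l y z kN lN kl ay az; apply: le_trans (pos_lipschitz _ _) _.
  rewrite (Rintegral_w_diff (lmeasurable_cut _ _ mA) (cut01 y) kN lN az ay).
  rewrite (@sum_split_index _ _ k _ _ (atom_mass n A) (fun i => (i < k)%N)) ?ltnn //.
    rewrite addrK; apply: w_atom_diff_mass_le => //.
    exact: (atom_mass_itv n_gt0 k (lmeasurable_cut 0 y mA)).
  by move=> i iN ik; exact: atom_mass_prefix.
- move=> l y z lN ay az.
  rewrite (Rintegral_w_diff (lmeasurable_cut _ _ mA) (cut01 y) lN lN az ay) big1.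
    by rewrite /pos maxxx.
  by move=> i _; rewrite subrr mul0r.
Qed.

Lemma Gamma_right_approx (A : set R) : Lmeas A ->
  `|tri_integral (fun y z => pos (\int[leb]_(x in A `&` `[z, 1]%classic) (w x y - w x z)))
    - tri_sum n (Gamma_right n w (atom_mass n A))| <= 2 * c / n%:R.
Proof.
move=> [mA A01]; have cut01 z : A `&` `[z, 1] `<=` `[0, 1] by move=> x [/A01].
apply: (tri_integral_approx n_gt0 (fun y z _ _ _ => pos_ge0 _) err_ge0).
- move=> k l y z kN lN kl ay az; apply: le_trans (pos_lipschitz _ _) _.
  rewrite (Rintegral_w_diff (lmeasurable_cut _ _ mA) (cut01 z) lN kN ay az).
  rewrite (@sum_split_index _ _ l _ _ (atom_mass n A) (fun i => (l < i)%N)) ?ltnn //.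
    rewrite addrK; apply: w_atom_diff_mass_le => //.
    exact: (atom_mass_itv n_gt0 l (lmeasurable_cut z 1 mA)).
  by move=> i iN il; exact: atom_mass_suffix.
- move=> l y z lN ay az.
  rewrite (Rintegral_w_diff (lmeasurable_cut _ _ mA) (cut01 z) lN lN ay az) big1.
    by rewrite /pos maxxx.
  by move=> i _; rewrite subrr mul0r.
Qed.

Lemma Gamma_disc_approx (A : set R) : Lmeas A ->
  `|Gamma w A - Gamma_disc n w (atom_mass n A)| <= 4 * c / n%:R.
Proof.
move=> LA; rewrite GammaE /Gamma_disc opprD addrACA.
apply: le_trans (ler_normD _ _) _.
have -> : 4 * c / n%:R = 2 * c / n%:R + 2 * c / n%:R by rewrite -mulrDl; congr (_ * _); ring.
by apply: lerD; [exact: Gamma_left_approx | exact: Gamma_right_approx].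
Qed.

End Gamma_approximation.

Section atom_union.
Context {R : realType}.
Variable n : nat.
Hypothesis n_gt0 : (0 < n)%N.

Let N := (2 * n).+1.

Definition atom_union (S : nat -> bool) : set R :=
  \bigcup_(k in [set k | (k < N)%N /\ S k]) atom n k.

Lemma An_star_atom_union S : An_star n (atom_union S).
Proof. by exists (fun k => S k). Qed.

Lemma An_star_Lmeas (A : set R) : An_star n A -> Lmeas A.
Proof.
case=> S ->; split.
- by apply: bigcup_measurable => k _; exact: lmeasurable_atom.
- by move=> x [k [kN _] ak]; exact: (atom_sub01 n_gt0 kN ak).
Qed.

Lemma atom_mass_atom_union S i : (i < N)%N ->
  atom_mass n (atom_union S) i = if S i then atom_len n i else 0.
Proof.
move=> iN; case Si: (S i).
- by apply: (atom_mass_full n_gt0) => x ax; exists i.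
- apply: atom_mass_eq0; apply/seteqP; split => // x [ax [k [_ Sk] akx]].
  by move: Sk; rewrite (atom_inj n_gt0 akx ax) Si.
Qed.

End atom_union.

Lemma Gamma_le_atom_union {R : realType} (n : nat) (w : R -> R -> R) (c : R) (A : set R) :
  (0 < n)%N -> (forall x y, x \in `[0, 1] -> y \in `[0, 1] -> `|w x y| <= c) ->
  An_star_measurable n w -> Lmeas A ->
  exists S, Gamma w A <= Gamma w (atom_union n S) + 8 * c / n%:R.
Proof.
move=> n_gt0 w_le w_step LA.
have [S hS] := Gamma_disc_vertex w (fun i => atom_mass_itv n_gt0 i LA.1).
exists S; have LB : Lmeas (atom_union n S : set R).
  exact: (An_star_Lmeas n_gt0 (An_star_atom_union n S)).
rewrite (@eq_Gamma_disc R n w (fun i => if S i then atom_len n i else 0)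
  (atom_mass n (atom_union n S))) in hS; last first.
  by move=> i iN; rewrite /= (atom_mass_atom_union n_gt0).
have := Gamma_disc_approx n_gt0 w_le w_step LA; rewrite ler_distl => /andP[_ hA].
have := Gamma_disc_approx n_gt0 w_le w_step LB; rewrite ler_distl => /andP[hB _].
have -> : 8 * c / n%:R = 4 * c / n%:R + 4 * c / n%:R by rewrite -mulrDl; congr (_ * _); ring.
rewrite addrA; apply: le_trans hA _; rewrite lerD2r; apply: le_trans hS _.
by rewrite -lerBlDr.
Qed.

Theorem mainTheorem6 (R : realType) :
  exists C : R,
  forall (n : nat) (c : R) (w : R -> R -> R),
    (0 < n)%N -> 0 < c ->
    (forall x y, x \in `[0, 1] -> y \in `[0, 1] -> w x y = w y x) ->
    (forall x y, x \in `[0, 1] -> y \in `[0, 1] -> `|w x y| <= c) ->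
    An_star_measurable n w ->
    `|Gamma_sup w - Gamma_max_n n w| <= C * c / n%:R.
Proof.
exists 8 => n c w n_gt0 _ _ w_le w_step; rewrite /Gamma_sup /Gamma_max_n.
set G := [set Gamma w A | A in Lmeas]; set Gn := [set Gamma w A | A in An_star n].
have GnG : Gn `<=` G by move=> _ [A /(An_star_Lmeas n_gt0) LA <-]; exists A.
have Gn0 : Gn !=set0.
  by exists (Gamma w (atom_union n xpred0)); exists (atom_union n xpred0);
    first exact: An_star_atom_union.
have G_ub : has_ubound G.
  by exists (4 * c) => _ [A LA <-]; exact: (Gamma_le n_gt0 w_le w_step LA).
have Gn_ub : has_ubound Gn by case: G_ub => b ub; exists b => x /GnG /ub.
have sup_n_le : sup Gn <= sup G.
  apply: sup_le => //; last by split => //; case: Gn0 => x /GnG; exists x.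
  by move=> x Gnx; exists x; split => //; exact: GnG.
have sup_le_n : sup G <= sup Gn + 8 * c / n%:R.
  apply: ge_sup => [|_ [A LA <-]]; first by case: Gn0 => x /GnG; exists x.
  have [S hS] := Gamma_le_atom_union n_gt0 w_le w_step LA.
  apply: le_trans hS _; rewrite lerD2r; apply: ub_le_sup => //.
  by exists (atom_union n S); first exact: An_star_atom_union.
by rewrite ger0_norm ?subr_ge0 // lerBlDl.
Qed.
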